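(* Let $k\ge1$ and $x\ge0$ be integers, and let $a_1,a_2,\dots,a_{2^k+x}$ be (not necessarily distinct) integers. Then at least one of the following holds: (1) there is a subset $I\subseteq\{1,\dots,2^k+x\}$ such that $\sum_{i\in I}a_i$ is divisible by $2^k$ but not by $2^{k+1}$; (2) there exist $x+1$ pairwise disjoint non-empty sets $A_1,\dots,A_{x+1}\subseteq\{1,\dots,2^k+x\}$ such that $\sum_{i\in A_s}a_i\equiv 0\pmod{2^{k+1}}$ for every $s\le x+1$. *)

From mathcomp Require Import all_boot all_order all_algebra.
Set Implicit Arguments. Unset Strict Implicit. Unset Printing Implicit Defensive.
Import Order.TTheory GRing.Theory Num.Theory.

From mathcomp Require Import all_boot all_order all_algebra zify.
Import Order.TTheory GRing.Theory Num.Theory.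
Local Open Scope ring_scope.
Set Implicit Arguments. Unset Strict Implicit. Unset Printing Implicit Defensive.

(* Work in G = Z/2^(k+1) with h = 2^k: h lies in every nonzero cyclic subgroup
   and -h = h.  If no subset sum of the a_i equals h, split off minimal nonempty
   zero-sum blocks one at a time.  For a minimal block B and b in B, the prefix
   sums of B \ {b} give |B| subset sums whose differences are subset sums of B up
   to sign (both signs, as B sums to 0).  The bound |A + C| >= |A| + |C| - 1,
   valid when 0 lies in A and C and h does not lie in A + C (Dyson's
   e-transform), shows that the sumset D of these prefix-sum sets, together with
   those of a final zero-sum-free part, satisfies |J| < |D| + #blocks.  No
   difference of two elements of D equals h, so D and D + h are disjoint and
   |D| <= 2^k: there are more than x blocks. *)

Section Sumset.
Variable G : finZmodType.
Implicit Types (A B D : {set G}) (a b : G).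

Definition sumset A B : {set G} := [set a + b | a in A, b in B].

Lemma sumset0 A : sumset A [set 0] = A.
Proof.
apply/setP=> z; apply/imset2P/idP => [[a b Aa]|Az]; last by exists z 0; rewrite ?inE ?addr0.
by rewrite inE => /eqP -> ->; rewrite addr0.
Qed.

Lemma mulrn_stable A b m : 0 \in A -> {in A, forall a, a + b \in A} -> b *+ m \in A.
Proof. by move=> A0 stabA; elim: m => [|m IHm]; rewrite ?mulr0n // mulrSr stabA. Qed.

Lemma card_diff_avoiding D h : {in D &, forall d d', d - d' != h} -> (#|D| * 2 <= #|G|)%N.
Proof.
move=> Dh; pose Dsh := [set d + h | d in D].
have DIDsh : D :&: Dsh = set0.
  apply/setP=> y; rewrite !inE; apply/negbTE/andP => -[Dy /imsetP[d Dd yE]].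
  by move: (Dh _ _ Dy Dd); rewrite yE addrAC subrr add0r eqxx.
rewrite muln2 -addnn -{2}(card_imset D (addIr h)) -cardsUI.
by rewrite DIDsh cards0 addn0 max_card.
Qed.

Section DysonTransform.
Variables (a : G) (A B : {set G}).

Definition dyson_l : {set G} := A :|: [set a + y | y in B].
Definition dyson_r : {set G} := [set y in B | a + y \in A].

Lemma sumset_dyson : sumset dyson_l dyson_r \subset sumset A B.
Proof.
apply/subsetP=> _ /imset2P[u y + + ->]; rewrite !inE.
move=> /orP[Au | /imsetP[z Bz ->]] /andP[By Aay].
  exact: imset2_f.
by rewrite addrAC; apply: imset2_f.
Qed.

Lemma card_dyson : (#|dyson_l| + #|dyson_r| = #|A| + #|B|)%N.
Proof.
have -> : #|dyson_r| = #|A :&: [set a + y | y in B]|.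
  rewrite -(card_imset dyson_r (addrI a)); apply: eq_card => z.
  rewrite inE; apply/imsetP/andP => [[y] | [Az /imsetP[y By zE]]].
    by rewrite inE => /andP[By Aay] ->; split; last exact: imset_f.
  by exists y; rewrite // inE By -zE Az.
by rewrite cardsUI card_imset //; apply: addrI.
Qed.

End DysonTransform.

Section AvoidingSumsets.
Variable h : G.
Hypothesis h_in_cyclic : forall g : G, g != 0 -> exists m, g *+ m = h.

Lemma exists_unstable A b : 0 \in A -> h \notin A -> b != 0 ->
  exists2 a, a \in A & a + b \notin A.
Proof.
move=> A0 hA /h_in_cyclic[m hE].
have [stabA | ] := boolP [forall a in A, a + b \in A].
  by rewrite -hE mulrn_stable // in hA => a /(forall_inP stabA).
by rewrite negb_forall_in => /exists_inP.
Qed.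

Lemma card_sumset_avoiding A B : 0 \in A -> 0 \in B -> h \notin sumset A B ->
  (#|A| + #|B| <= #|sumset A B| + 1)%N.
Proof.
elim: {B}_.+1 {-2}B (ltnSn #|B|) A => // n IHn B ltBn A A0 B0 hAB.
have [B'0 | [b]] := set_0Vmem (B :\ 0).
  by rewrite -(setD1K B0) B'0 setU0 sumset0 cards1.
rewrite !inE => /andP[bn0 Bb].
have hA : h \notin A by apply: contra hAB => Ah; rewrite -[h]addr0 imset2_f.
have [a Aa Nab] := exists_unstable A0 hA bn0.
have ltBn' : (#|dyson_r a A B| < n)%N.
  rewrite -ltnS (leq_trans _ ltBn) // ltnS; apply/proper_card/properP; split.
    by apply/subsetP => y; rewrite inE => /andP[].
  by exists b; rewrite // inE (negbTE Nab) andbF.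
have sub_dyson := sumset_dyson a A B.
have := IHn _ ltBn' (dyson_l a A B).
rewrite !inE A0 B0 addr0 Aa card_dyson => /(_ isT isT (contra (subsetP sub_dyson h) hAB)).
by move/leq_trans; apply; rewrite leq_add2r subset_leq_card.
Qed.

End AvoidingSumsets.

End Sumset.

Section SubsetSums.
Variables (I : finType) (G : finZmodType) (f : I -> G).
Implicit Types (B J V W X : {set I}) (C D : {set G}).

Definition subsum V := \sum_(i in V) f i.

Definition subset_sums J : {set G} := [set subsum V | V in powerset J].

Lemma subset_sumsP J g :
  reflect (exists2 V : {set I}, V \subset J & g = subsum V) (g \in subset_sums J).
Proof.
by apply: (iffP imsetP) => -[V JV ->]; exists V; rewrite // ?powersetE in JV *.
Qed.

Lemma subsum0 : subsum set0 = 0.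
Proof. exact: big_set0. Qed.

Lemma subsumU V W : [disjoint V & W] -> subsum (V :|: W) = subsum V + subsum W.
Proof. by move=> VW; rewrite -bigU //; apply: eq_bigl => i; rewrite !inE. Qed.

Lemma subsumD W V : V \subset W -> subsum (W :\: V) = subsum W - subsum V.
Proof.
by move=> VW; rewrite [subsum W](big_setID V) /= (setIidPr VW) addrC addrK.
Qed.

Lemma subset_sums0 J : 0 \in subset_sums J.
Proof. by apply/subset_sumsP; exists set0; rewrite ?sub0set ?subsum0. Qed.

Lemma subset_sumsS J1 J2 : J1 \subset J2 -> subset_sums J1 \subset subset_sums J2.
Proof.
move=> J12; apply/subsetP=> _ /subset_sumsP[V VJ1 ->].
by apply/subset_sumsP; exists V; rewrite ?(subset_trans VJ1).
Qed.

Lemma subset_sumsD J1 J2 u v : [disjoint J1 & J2] ->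
  u \in subset_sums J1 -> v \in subset_sums J2 -> u + v \in subset_sums (J1 :|: J2).
Proof.
move=> J12 /subset_sumsP[V VJ1 ->] /subset_sumsP[W WJ2 ->].
apply/subset_sumsP; exists (V :|: W); first exact: setUSS.
by rewrite subsumU // (disjointWl VJ1) // (disjointWr WJ2).
Qed.

Lemma subset_sumsN B g : subsum B = 0 -> (- g \in subset_sums B) = (g \in subset_sums B).
Proof.
move=> B0; suff opp_sums x : x \in subset_sums B -> - x \in subset_sums B.
  by apply/idP/idP => /opp_sums; rewrite ?opprK.
case/subset_sumsP=> V VB ->; apply/subset_sumsP; exists (B :\: V).
  exact: subsetDl.
by rewrite subsumD // B0 sub0r.
Qed.

Definition zero_sum_free X := forall W, W \subset X -> W != set0 -> subsum W != 0.

Definition sum_system J D := [/\ 0 \in D, D \subset subset_sums J &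
  {in D &, forall d d', (d - d' \in subset_sums J) || (d' - d \in subset_sums J)}].

Lemma sum_systemS J1 J2 D : J1 \subset J2 -> sum_system J1 D -> sum_system J2 D.
Proof.
move=> J12 [D0 DJ1 diffD]; have sub := subsetP (subset_sumsS J12).
split=> //; first exact: subset_trans (subset_sumsS J12).
by move=> d d' Dd Dd'; case/orP: (diffD d d' Dd Dd') => /sub ->; rewrite ?orbT.
Qed.

Lemma sum_system_sumset J1 J2 D1 D2 : [disjoint J1 & J2] -> subsum J2 = 0 ->
  sum_system J1 D1 -> sum_system J2 D2 -> sum_system (J1 :|: J2) (sumset D1 D2).
Proof.
move=> J12 J2_0 [D1_0 D1J1 diffD1] [D2_0 D2J2 diffD2]; split.
- by rewrite -[0]addr0 imset2_f.
- apply/subsetP=> _ /imset2P[d1 d2 Dd1 Dd2 ->].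
  by apply: subset_sumsD => //; [apply: (subsetP D1J1) | apply: (subsetP D2J2)].
- move=> _ _ /imset2P[d1 d2 Dd1 Dd2 ->] /imset2P[e1 e2 De1 De2 ->].
  have := diffD2 _ _ Dd2 De2; rewrite -opprB subset_sumsN // orbb => ed2.
  have de2 : d2 - e2 \in subset_sums J2 by rewrite -opprB subset_sumsN.
  rewrite !opprD [d1 + d2 + _]addrACA [e1 + e2 + _]addrACA.
  by case/orP: (diffD1 _ _ Dd1 De1) => ?; apply/orP; [left | right]; apply: subset_sumsD.
Qed.

Lemma sum_system_chain X : zero_sum_free X -> exists2 C, sum_system X C & (#|X| < #|C|)%N.
Proof.
elim: {X}_.+1 {-2}X (ltnSn #|X|) => // n IHn X ltXn zsfX.
have [-> | [x Xx]] := set_0Vmem X.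
  exists [set 0]; last by rewrite cards0 cards1.
  split; rewrite ?inE ?sub1set ?subset_sums0 // => _ _ /set1P-> /set1P->.
  by rewrite subrr subset_sums0.
have X'X : X :\ x \subset X := subD1set X x.
have ltX'n : (#|X :\ x| < n)%N by rewrite -ltnS (leq_trans _ ltXn) // ltnS (cardsD1 x X) Xx.
have [C' sysC' ltC'] : exists2 C', sum_system (X :\ x) C' & (#|X :\ x| < #|C'|)%N.
  by apply: IHn => // W WX'; apply: zsfX; rewrite (subset_trans WX').
have topC' c : c \in C' -> subsum X - c \in subset_sums X.
  case: sysC' => _ /subsetP C'X' _ /C'X' /subset_sumsP[Y YX' ->].
  apply/subset_sumsP; exists (X :\: Y); first exact: subsetDl.
  by rewrite subsumD // (subset_trans YX').
have [C'0 C'X diffC'] := sum_systemS X'X sysC'.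
exists (subsum X |: C'); first split.
- by rewrite !inE C'0 orbT.
- by rewrite subUset sub1set C'X andbT; apply/subset_sumsP; exists X.
- move=> c c' /setU1P[-> | Cc] /setU1P[-> | Cc'];
    by rewrite ?subrr ?subset_sums0 ?topC' ?diffC' ?orbT.
have XC' : subsum X \notin C'.
  apply/negP; case: sysC' => _ /subsetP C'X' _ /C'X' /subset_sumsP[Y YX' XY].
  have xY : x \notin Y by apply/negP => /(subsetP YX'); rewrite !inE eqxx.
  have XYn0 : X :\: Y != set0 by apply/set0Pn; exists x; rewrite inE xY.
  have := zsfX _ (subsetDl X Y) XYn0.
  by rewrite subsumD ?XY ?subrr ?eqxx // (subset_trans YX').
by rewrite cardsU1 XC' (cardsD1 x X) Xx.
Qed.

Lemma zero_sum_free_or_minimal J : zero_sum_free J \/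
  exists B b, [/\ B \subset J, b \in B, subsum B = 0 & zero_sum_free (B :\ b)].
Proof.
pose P := [pred W : {set I} | [&& W \subset J, W != set0 & subsum W == 0]].
have [/existsP[W PW] | /existsPn noP] := boolP [exists W, P W]; last first.
  by left=> W WJ Wn0; move: (noP W); rewrite /= WJ Wn0.
right; have [B /minsetP[/and3P[BJ Bn0 /eqP B0] minB] _] := minset_exists PW.
have [b Bb] := set0Pn _ Bn0; exists B, b; split=> // V VB' Vn0; apply/eqP=> V0.
have VB : V \subset B := subset_trans VB' (subD1set B b).
have VE : V = B by apply: minB; rewrite //= (subset_trans VB BJ) Vn0 V0 eqxx.
by move: (subsetP VB' b); rewrite VE !inE eqxx => /(_ Bb).
Qed.

Definition zero_sum_packing J (F : {set {set I}}) :=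
  [/\ trivIset F, set0 \notin F & {in F, forall B, B \subset J /\ subsum B = 0}].

Lemma zero_sum_packing0 J : zero_sum_packing J set0.
Proof.
split=> [||B]; rewrite ?inE //.
by rewrite /trivIset /cover !big_pred0 ?cards0 // => B; rewrite inE.
Qed.

Lemma zero_sum_packingU1 J J' F B : J' \subset J -> [disjoint J' & B] ->
    zero_sum_packing J' F -> B \subset J -> B != set0 -> subsum B = 0 ->
  zero_sum_packing J (B |: F) /\ #|B |: F| = #|F|.+1.
Proof.
move=> J'J J'B [trivF F0 FJ'] BJ Bn0 B0.
have BF : {in F, forall B', [disjoint B & B']}.
  move=> B' /FJ'[B'J' _]; rewrite disjoint_sym; exact: disjointWl J'B.
have [trivBF BnF] := trivIsetU1 BF trivF F0.
split; last by rewrite cardsU1 BnF.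
split=> //; first by rewrite !inE eq_sym negb_or Bn0.
move=> B' /setU1P[-> // | /FJ'[B'J' B'0]].
by split=> //; apply: subset_trans J'J.
Qed.

Section AvoidingSubsetSums.
Variable h : G.
Hypothesis h_in_cyclic : forall g : G, g != 0 -> exists m, g *+ m = h.

Lemma zero_sum_packing_sum_system J : h \notin subset_sums J ->
  exists F D, [/\ zero_sum_packing J F, sum_system J D & (#|J| < #|D| + #|F|)%N].
Proof.
elim: {J}_.+1 {-2}J (ltnSn #|J|) => // n IHn J ltJn hJ.
have [zsfJ | [B [b [BJ Bb B0 zsfB']]]] := zero_sum_free_or_minimal J.
  have [C sysC ltC] := sum_system_chain zsfJ.
  by exists set0, C; rewrite cards0 addn0; split; first exact: zero_sum_packing0.
set J' := J :\: B.
have [J'J J'B] : J' \subset J /\ [disjoint J' & B] by apply/subsetDP.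
have Bn0 : B != set0 by apply/set0Pn; exists b.
have ltJ'n : (#|J'| < n)%N.
  by move: ltJn (Bn0) (subset_leq_card BJ); rewrite /J' cardsDS // -card_gt0; lia.
have hJ' : h \notin subset_sums J' by apply: contra hJ; apply/subsetP/subset_sumsS.
have [F' [D' [packF' sysD' ltD']]] := IHn J' ltJ'n hJ'.
have [C sysC ltC] := sum_system_chain zsfB'.
have JE : J' :|: B = J by rewrite setUC -[RHS](setID J B) (setIidPr BJ).
have := sum_system_sumset J'B B0 sysD' (sum_systemS (subD1set B b) sysC).
rewrite JE => sysD; have [packF cardF] := zero_sum_packingU1 J'J J'B packF' BJ Bn0 B0.
exists (B |: F'), (sumset D' C); split=> //.
have hD : h \notin sumset D' C.
  by case: sysD => _ /subsetP DJ _; apply: contra hJ => /DJ.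
have [[D'0 _ _] [C0 _ _]] := (sysD', sysC).
have := card_sumset_avoiding h_in_cyclic D'0 C0 hD.
rewrite cardF -JE cardsU (disjoint_setI0 J'B) cards0 subn0.
move: ltC; rewrite (cardsD1 b B) Bb.
lia.
Qed.

Lemma large_zero_sum_packing : - h = h -> h \notin subset_sums [set: I] ->
  exists2 F, zero_sum_packing [set: I] F & (#|I| < #|G| %/ 2 + #|F|)%N.
Proof.
move=> hN hI; have [F [D [packF [_ _ diffD] ltDF]]] := zero_sum_packing_sum_system hI.
exists F => //.
have : (#|D| * 2 <= #|G|)%N.
  apply: (card_diff_avoiding (h := h)) => d d' Dd Dd'; apply: contraNneq hI => dE.
  by case/orP: (diffD _ _ Dd Dd'); [rewrite -dE | rewrite -hN -dE opprB].
by move: ltDF; rewrite cardsT; lia.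
Qed.

End AvoidingSubsetSums.

End SubsetSums.

Lemma Zp_intr_eq0 (n : nat) (z : int) :
  (1 < n)%N -> ((z%:~R : 'Z_n) == 0) = (n%:Z %| z)%Z.
Proof.
move=> n_gt1; have natE m : ((m%:R : 'Z_n) == 0) = (n %| m)%N.
  by rewrite -val_eqE /= val_Zp_nat.
by case: z => m; rewrite ?NegzE ?mulrNz ?oppr_eq0 ?rpredN /= natE.
Qed.

Lemma pow2S_gt1 k : (1 < 2 ^ k.+1)%N.
Proof. by rewrite -{1}(expn0 2) ltn_exp2l. Qed.

Section DyadicHalf.
Variable k : nat.
Let pow2_gt1 := pow2S_gt1 k.

Lemma half_in_cyclic (g : 'Z_(2 ^ k.+1)) : g != 0 -> exists m, g *+ m = (2 ^ k)%:R.
Proof.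
move=> gn0; have g_gt0 : (0 < g)%N.
  by rewrite lt0n; apply: contra gn0 => /eqP g0; apply/eqP/val_inj.
have [u oddu gE] := pfactor_coprime (isT : prime 2) g_gt0.
rewrite coprime2n in oddu; set e := logn 2 g in gE.
have le_ek : (e <= k)%N.
  have g_lt : (g < 2 ^ k.+1)%N.
    by have := ltn_ord g; rewrite [X in (_ < X)%N -> _]Zp_cast.
  rewrite -ltnS -(ltn_exp2l _ _ (isT : (1 < 2)%N)) (leq_ltn_trans _ g_lt) //.
  by rewrite gE leq_pmull // odd_gt0.
exists (2 ^ (k - e))%N.
rewrite -[g]natr_Zp -mulrnA gE -mulnA -expnD subnKC //.
rewrite -(odd_double_half u) oddu mulnDl mul1n -muln2 -mulnA -expnS.
by rewrite natrD natrM pchar_Zp // mulr0 addr0.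
Qed.

Lemma oppr_half : - ((2 ^ k)%:R : 'Z_(2 ^ k.+1)) = (2 ^ k)%:R.
Proof.
by apply/eqP; rewrite eq_sym -subr_eq0 opprK -natrD addnn -mul2n -expnS pchar_Zp.
Qed.

Lemma intr_pow2_eq0 (z : int) :
  ((z%:~R : 'Z_(2 ^ k.+1)) == 0) = ((2%:Z) ^+ k.+1 %| z)%Z.
Proof. by rewrite Zp_intr_eq0 // -natz natrX natz. Qed.

Lemma intr_half (z : int) : (z%:~R : 'Z_(2 ^ k.+1)) = (2 ^ k)%:R ->
  ((2%:Z) ^+ k %| z)%Z && ~~ ((2%:Z) ^+ k.+1 %| z)%Z.
Proof.
move=> zE; have : ((z - (2 ^ k)%N%:Z)%:~R : 'Z_(2 ^ k.+1)) == 0.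
  by rewrite intrD intrN zE subrr.
rewrite intr_pow2_eq0 -natz natrX natz => dvd_diff.
have dvd_pow : ((2%:Z) ^+ k %| (2%:Z) ^+ k.+1)%Z by apply: dvdz_exp2l.
have ndvd_pow : ~~ ((2%:Z) ^+ k.+1 %| (2%:Z) ^+ k)%Z.
  by rewrite dvdzE !abszX /= dvdn_Pexp2l // ltnn.
apply/andP; split.
  by rewrite -(subrK (2%:Z ^+ k) z) rpredD // (dvdz_trans dvd_pow).
by apply: contra ndvd_pow => dvd_z; rewrite -(subKr z (2%:Z ^+ k)) rpredB.
Qed.

End DyadicHalf.

Theorem lemma1p11 (k x : nat) (hk : (1 <= k)%N) (a : 'I_(2 ^ k + x) -> int) :
  (exists I : {set 'I_(2 ^ k + x)},
      ((2%:Z) ^+ k %| \sum_(i in I) a i)%Z /\ ~~ ((2%:Z) ^+ k.+1 %| \sum_(i in I) a i)%Z)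
  \/
  (exists A : 'I_x.+1 -> {set 'I_(2 ^ k + x)},
      (forall s, A s != set0) /\
      (forall s t, s != t -> [disjoint A s & A t]) /\
      (forall s, ((2%:Z) ^+ k.+1 %| \sum_(i in A s) a i)%Z)).
Proof.
pose f i : 'Z_(2 ^ k.+1) := (a i)%:~R.
have subsumE V : subsum f V = (\sum_(i in V) a i)%:~R by rewrite raddf_sum.
have [/subset_sumsP[I _] | hI] := boolP ((2 ^ k)%:R \in subset_sums f [set: _]).
  by rewrite subsumE => /esym/intr_half/andP ?; left; exists I.
have [F [trivF F0 FJ] ltF] := large_zero_sum_packing (@half_in_cyclic k) (oppr_half k) hI.
have ltxF : (x.+1 <= #|F|)%N.
  by move: ltF; rewrite !card_ord (Zp_cast (pow2S_gt1 k)) expnS mulKn // ltn_add2l.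
right; exists (fun s => enum_val (widen_ord ltxF s)); split; [|split].
- by move=> s; apply: contraNneq F0 => <-; apply: enum_valP.
- move=> s t st; apply: (trivIsetP trivF); rewrite ?enum_valP //.
  by apply: contraNneq st => /enum_val_inj/(congr1 val) /= /val_inj ->.
- move=> s; have [_] := FJ _ (enum_valP (widen_ord ltxF s)).
  by rewrite subsumE => /eqP; rewrite intr_pow2_eq0.
Qed.
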